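(* Let $\psi:\mathbb{R}\times\mathbb{Z}\to\mathbb{C}$ solve the lattice nonlinear Schrödinger equation $$i\,\partial_t\psi(t,x)=-\Delta\psi(t,x)+|\psi(t,x)|^2\psi(t,x),\qquad x\in\mathbb{Z},$$ where $\Delta f(x)=f(x+1)+f(x-1)-2f(x)$, with initial data satisfying $|\psi(0,x)|\le A$ for all $x\in\mathbb{Z}$. Then there exists a constant $C$ such that for every $x_0\in\mathbb{Z}$ and every $t_0\ge 1$, $$|\psi(t_0,x_0)|\le C A\, t_0^{1/2},\qquad\text{and}\qquad \frac{1}{t_0}\sum_{x\in\mathbb{Z},\,|x-x_0|\le t_0}|\psi(t_0,x)|^2\le C A^2 .$$
   Context: $\Delta=-\partial^*\partial$ is the finite-difference Laplacian on $\mathbb{Z}$, with $\partial f(x)=f(x+1)-f(x)$ and $\partial^*f(x)=f(x-1)-f(x)$. The solution is understood as a global-in-time solution with values in $\ell^\infty(\mathbb{Z})$. *)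

From Stdlib Require Import Reals ZArith.
From Coquelicot Require Import Coquelicot.
Open Scope R_scope.

Definition lap (f : Z -> C) (x : Z) : C :=
  (f (x + 1)%Z + f (x - 1)%Z - RtoC 2 * f x)%C.

(* psi : R -> Z -> C is a global-in-time l^infty(Z)-valued solution of
     i d/dt psi(t,x) = - (Delta psi(t))(x) + |psi(t,x)|^2 psi(t,x):
   each coordinate is differentiable in t and satisfies the equation
   (written as d/dt psi = -i * RHS), and psi is bounded in l^infty(Z)
   locally uniformly in time. *)
Definition is_lattice_NLS_solution (psi : R -> Z -> C) : Prop :=
  (forall (t : R) (x : Z),
      is_derive (fun s : R => psi s x) t
        (Copp Ci * (Copp (lap (psi t) x)
                    + RtoC (Cmod (psi t x) ^ 2) * psi t x))%C)
  /\ (forall T : R, exists M : R, forall (t : R) (x : Z),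
        Rabs t <= T -> Cmod (psi t x) <= M).

(* Sum of |psi(t0,x)|^2 over integers x with |x - x0| <= t0 (t0 >= 0):
   these are exactly x = x0 - N + k, k = 0..2N, with N = floor t0. *)
Definition local_mass (psi : R -> Z -> C) (t0 : R) (x0 : Z) : R :=
  let N := Int_part t0 in
  sum_f_R0 (fun k : nat => Cmod (psi t0 (x0 - N + Z.of_nat k)%Z) ^ 2)
           (Z.to_nat (2 * N)).

From Stdlib Require Import Reals ZArith Lia Lra Psatz.
From Coquelicot Require Import Coquelicot.
Open Scope R_scope.

(* Multiplying the equation by the conjugate of [psi] gives the discrete continuity
   equation d/dt |psi x|^2 = 2 (J x - J (x - 1)) for the current
   J x = Im (psi x * conj (psi (x + 1))), which satisfies
   |J x| <= (|psi x|^2 + |psi (x + 1)|^2) / 2.  Weight the mass by q^|x - x0| with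
   q = exp (- 1 / t0): summation by parts bounds the growth rate of this weighted mass
   by 2 (1/q - 1) <= 2 e / t0 times itself, up to boundary terms of a finite truncation
   that vanish as the truncation grows.  By Gronwall the weighted mass at time t0 is at
   most e^(2 e) times its initial value, which is at most 4 t0 A^2.  On the window
   |x - x0| <= t0 the weight is at least 1/e, which bounds the local mass by
   4 e e^(2 e) A^2 t0; the pointwise bound is the single term x = x0. *)

Lemma is_derive_Re (f : R -> C) (t : R) (l : C) :
  is_derive f t l -> is_derive (fun s => Re (f s)) t (Re l).
Proof.
  intros H. apply (filterdiff_comp f (fun z : C => fst z) _ (fun z : C => fst z) H).
  apply filterdiff_linear, is_linear_fst.
Qed.

Lemma is_derive_Im (f : R -> C) (t : R) (l : C) :
  is_derive f t l -> is_derive (fun s => Im (f s)) t (Im l).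
Proof.
  intros H. apply (filterdiff_comp f (fun z : C => snd z) _ (fun z : C => snd z) H).
  apply filterdiff_linear, is_linear_snd.
Qed.

Lemma is_derive_Cmod_sqr (f : R -> C) (t : R) (l : C) (d : R) :
  is_derive f t l -> d = 2 * (Re (f t) * Re l + Im (f t) * Im l) ->
  is_derive (fun s => Cmod (f s) ^ 2) t d.
Proof.
  intros Hf ->.
  apply (is_derive_ext (fun s => plus (Re (f s) ^ 2) (Im (f s) ^ 2))).
  { intros s. symmetry. apply Cmod2_alt. }
  replace (2 * (Re (f t) * Re l + Im (f t) * Im l)) with (plus
    (INR 2 * Re l * Re (f t) ^ pred 2) (INR 2 * Im l * Im (f t) ^ pred 2))
    by (unfold plus; simpl; ring).
  apply (is_derive_plus (fun s => Re (f s) ^ 2) (fun s => Im (f s) ^ 2)).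
  - apply (is_derive_pow (fun s => Re (f s))), is_derive_Re, Hf.
  - apply (is_derive_pow (fun s => Im (f s))), is_derive_Im, Hf.
Qed.

Lemma is_derive_sum_f_R0 (f : nat -> R -> R) (df : nat -> R) (t : R) (n : nat) :
  (forall k, is_derive (f k) t (df k)) ->
  is_derive (fun s => sum_f_R0 (fun k => f k s) n) t (sum_f_R0 df n).
Proof.
  intros H. induction n as [|n IH]; [apply H|].
  apply (is_derive_plus _ _ _ _ _ IH (H (S n))).
Qed.

Lemma gronwall_linear (W dW : R -> R) (lam E T : R) : 0 < lam -> 0 <= T ->
  (forall t, is_derive W t (dW t)) ->
  (forall t, 0 <= t <= T -> dW t <= lam * W t + E) ->
  W T + E / lam <= exp (lam * T) * (W 0 + E / lam).
Proof.
  intros Hlam HT HW Hbound.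
  set (F t := exp (- lam * t) * (W t + E / lam)).
  set (dF t := exp (- lam * t) * (dW t - lam * W t - E)).
  assert (HF : forall t, is_derive F t (dF t)).
  { intros t. unfold F, dF.
    auto_derive; [exact (ex_intro _ _ (HW t))|].
    replace (Derive (fun x : R => W x) t) with (dW t)
      by (symmetry; apply is_derive_unique, HW).
    field. lra. }
  destruct (MVT_gen F 0 T dF) as [c [Hc HFc]].
  - intros x _. apply HF.
  - intros x _. apply derivable_continuous_pt. exists (dF x).
    apply is_derive_Reals, HF.
  - rewrite Rmin_left, Rmax_right in Hc by lra.
    assert (HdF : dF c <= 0).
    { unfold dF. pose proof (exp_pos (- lam * c)). specialize (Hbound c Hc). nra. }
    assert (HFT : F T <= F 0) by nra.
    unfold F in HFT. rewrite Rmult_0_r, exp_0, Rmult_1_l in HFT.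
    replace (W T + E / lam)
      with (exp (lam * T) * (exp (- lam * T) * (W T + E / lam))).
    + pose proof (exp_pos (lam * T)). nra.
    + rewrite <- Rmult_assoc, <- exp_plus.
      replace (lam * T + - lam * T) with 0 by ring. rewrite exp_0. ring.
Qed.

Lemma exp_le_exp x y : x <= y -> exp x <= exp y.
Proof. intros [H | ->]; [left; apply exp_increasing, H | right; reflexivity]. Qed.

Lemma exp_sub_1_le s : 0 <= s <= 1 -> exp s - 1 <= exp 1 * s.
Proof.
  intros Hs. pose proof (exp_ineq1_le (- s)) as H.
  rewrite exp_Ropp in H. pose proof (exp_pos s).
  assert (exp s <= exp 1) by (apply exp_le_exp; lra).
  assert (Hinv : exp s * / exp s = 1) by (field; lra).
  nra.
Qed.

Lemma inv_1_sub_exp_opp_le s : 0 < s <= 1 -> / (1 - exp (- s)) <= 2 / s.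
Proof.
  intros Hs. pose proof (exp_ineq1 s ltac:(lra)) as H.
  rewrite exp_Ropp. pose proof (exp_pos s).
  assert (Hgap : s / 2 <= 1 - / exp s).
  { apply Rmult_le_reg_r with (exp s); [lra|].
    rewrite Rmult_minus_distr_r, Rinv_l by lra. nra. }
  replace (2 / s) with (/ (s / 2)) by (field; lra).
  apply Rinv_le_contravar; lra.
Qed.

Lemma exp_opp_pow_ge s N : 0 <= s -> s * INR N <= 1 -> exp (- 1) <= exp (- s) ^ N.
Proof.
  intros Hs HN. rewrite <- Rpower_pow by apply exp_pos.
  unfold Rpower. rewrite ln_exp. apply exp_le_exp. lra.
Qed.

Lemma le_of_le_add_pow (a b c q : R) (K0 : nat) : 0 <= q < 1 ->
  (forall K, (K0 <= K)%nat -> a <= b + c * q ^ K) -> a <= b.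
Proof.
  intros Hq H. apply Rnot_lt_le. intros Hba.
  assert (Hpos : 0 < (a - b) / (Rabs c + 1))
    by (apply Rdiv_lt_0_compat; [lra | pose proof (Rabs_pos c); lra]).
  destruct (pow_lt_1_zero q ltac:(rewrite Rabs_pos_eq; lra) _ Hpos) as [K1 HK1].
  set (K := Nat.max K0 K1).
  specialize (H K ltac:(lia)). specialize (HK1 K ltac:(lia)).
  assert (HqK : 0 <= q ^ K) by (apply pow_le; lra).
  rewrite Rabs_pos_eq in HK1 by exact HqK.
  assert (Hc : c * q ^ K <= Rabs c * q ^ K)
    by (apply Rmult_le_compat_r; [exact HqK | apply Rle_abs]).
  apply Rmult_lt_compat_r with (r := Rabs c + 1) in HK1; [|pose proof (Rabs_pos c); lra].
  unfold Rdiv in HK1. rewrite Rmult_assoc, Rinv_l in HK1 by (pose proof (Rabs_pos c); lra).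
  nra.
Qed.

Lemma sum_f_R0_by_parts (w gp gm : nat -> R) (n : nat) :
  (forall k, gm (S k) = gp k) ->
  sum_f_R0 (fun k => w k * (gp k - gm k)) (S n) =
  sum_f_R0 (fun k => (w k - w (S k)) * gp k) n
  + w (S n) * gp (S n) - w 0%nat * gm 0%nat.
Proof.
  intros Hg. induction n as [|n IH]; simpl in *.
  - rewrite Hg. ring.
  - rewrite IH, Hg. ring.
Qed.

Lemma sum_f_R0_monotone (f : nat -> R) (n m : nat) :
  (forall j, 0 <= f j) -> (n <= m)%nat -> sum_f_R0 f n <= sum_f_R0 f m.
Proof.
  intros Hf Hnm. induction Hnm as [|m _ IH]; [lra|].
  simpl. specialize (Hf (S m)). lra.
Qed.

Lemma sum_f_R0_shift_le (g : nat -> R) (n d m : nat) :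
  (forall j, 0 <= g j) -> (n + d <= m)%nat ->
  sum_f_R0 (fun k => g (k + d)%nat) n <= sum_f_R0 g m.
Proof.
  revert g m. induction d as [|d IH]; intros g m Hg Hm.
  - rewrite (sum_eq _ g) by (intros; f_equal; lia).
    apply sum_f_R0_monotone; [exact Hg | lia].
  - rewrite (sum_eq _ (fun k => g (S (k + d)))) by (intros; f_equal; lia).
    rewrite (decomp_sum g m) by lia.
    specialize (IH (fun j => g (S j)) (pred m) (fun j => Hg (S j)) ltac:(lia)).
    specialize (Hg 0%nat). lra.
Qed.

(* [K - k + (k - K)] is [|k - K|], by truncated subtraction on [nat]. *)
Definition weight (q : R) (K k : nat) : R := q ^ (K - k + (k - K)).

Lemma weight_pos q K k : 0 < q -> 0 < weight q K k.
Proof. intros; apply pow_lt; assumption. Qed.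

Lemma weight_succ q K k :
  weight q K (S k) = q * weight q K k \/ weight q K k = q * weight q K (S k).
Proof.
  unfold weight. destruct (Nat.lt_ge_cases k K).
  - right. replace (K - k + (k - K))%nat with (S (K - S k + (S k - K))) by lia.
    reflexivity.
  - left. replace (K - S k + (S k - K))%nat with (S (K - k + (k - K))) by lia.
    reflexivity.
Qed.

Lemma Rabs_weight_sub_succ q K k : 0 < q <= 1 ->
  Rabs (weight q K k - weight q K (S k)) <= (/ q - 1) * weight q K k /\
  Rabs (weight q K k - weight q K (S k)) <= (/ q - 1) * weight q K (S k).
Proof.
  intros Hq.
  pose proof (weight_pos q K k ltac:(lra)). pose proof (weight_pos q K (S k) ltac:(lra)).
  assert (Hcq : (/ q - 1) * q = 1 - q) by (field; lra).
  assert (Hc : 1 - q <= / q - 1).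
  { assert (1 <= / q) by (rewrite <- Rinv_1; apply Rinv_le_contravar; lra). nra. }
  destruct (weight_succ q K k) as [E | E]; rewrite E in *;
    split; apply Rabs_le; split; nra.
Qed.

Lemma sum_weight q K :
  sum_f_R0 (weight q K) (2 * K) + 1 = 2 * sum_f_R0 (fun i => q ^ i) K.
Proof.
  induction K as [|K IH]; [unfold weight; simpl; ring|].
  replace (2 * S K)%nat with (S (S (2 * K))) by lia.
  rewrite (decomp_sum (weight q (S K))), Nat.pred_succ by lia.
  rewrite tech5, (tech5 (fun i => q ^ i)).
  rewrite (sum_eq _ (weight q K)) by reflexivity.
  unfold weight at 1 3.
  replace (S K - 0 + (0 - S K))%nat with (S K) by lia.
  replace (S K - S (S (2 * K)) + (S (S (2 * K)) - S K))%nat with (S K) by lia.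
  lra.
Qed.

Lemma sum_weight_le q K : 0 < q < 1 -> sum_f_R0 (weight q K) (2 * K) <= 2 / (1 - q).
Proof.
  intros Hq. pose proof (sum_weight q K) as Hsum.
  rewrite tech3 in Hsum by lra.
  pose proof (pow_lt q (S K) ltac:(lra)).
  assert (Hgeo : (1 - q ^ S K) / (1 - q) <= 1 / (1 - q))
    by (apply Rmult_le_compat_r; [left; apply Rinv_0_lt_compat |]; lra).
  unfold Rdiv in *. lra.
Qed.

Lemma pow_le_weight q K k m : 0 < q <= 1 -> (K - k + (k - K) <= m)%nat ->
  q ^ m <= weight q K k.
Proof.
  intros Hq Hm. unfold weight.
  replace m with (K - k + (k - K) + (m - (K - k + (k - K))))%nat by lia.
  rewrite pow_add. pose proof (pow_lt q (K - k + (k - K)) ltac:(lra)).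
  assert (q ^ (m - (K - k + (k - K))) <= 1)
    by (rewrite <- (pow1 (m - (K - k + (k - K)))); apply pow_incr; lra).
  nra.
Qed.

Definition site (x0 : Z) (K k : nat) : Z := (x0 - Z.of_nat K + Z.of_nat k)%Z.

Lemma site_succ x0 K k : site x0 K (S k) = (site x0 K k + 1)%Z.
Proof. unfold site. rewrite Nat2Z.inj_succ. ring. Qed.

Section Lattice_mass.

Variable psi : R -> Z -> C.

Definition density (t : R) (x : Z) : R := Cmod (psi t x) ^ 2.

Definition flux (t : R) (x : Z) : R := Im (psi t x * Cconj (psi t (x + 1)))%C.

Lemma density_le t x M : Cmod (psi t x) <= M -> density t x <= M ^ 2.
Proof. intros H. apply pow_incr. pose proof (Cmod_ge_0 (psi t x)). lra. Qed.

Lemma density_nonneg t x : 0 <= density t x.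
Proof. apply pow2_ge_0. Qed.

(* The cubic term is real, so it drops out of the time derivative of the density. *)
Lemma is_derive_density t x : is_lattice_NLS_solution psi ->
  is_derive (fun s => density s x) t (2 * flux t x - 2 * flux t (x - 1)).
Proof.
  intros [Hpsi _]. apply (is_derive_Cmod_sqr _ _ _ _ (Hpsi t x)).
  unfold flux, lap. replace (x - 1 + 1)%Z with x by ring.
  destruct (psi t x) as [a b], (psi t (x + 1)%Z) as [a1 b1], (psi t (x - 1)%Z) as [a2 b2].
  simpl. ring.
Qed.

Lemma Rabs_flux_le t x : Rabs (flux t x) <= (density t x + density t (x + 1)) / 2.
Proof.
  unfold flux, density. rewrite !Cmod2_alt.
  destruct (psi t x) as [a b], (psi t (x + 1)%Z) as [a1 b1]. simpl.
  pose proof (pow2_ge_0 (b - a1)). pose proof (pow2_ge_0 (b + a1)).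
  pose proof (pow2_ge_0 (a - b1)). pose proof (pow2_ge_0 (a + b1)).
  apply Rabs_le. split; nra.
Qed.

Definition weighted_mass (q : R) (K : nat) (x0 : Z) (t : R) : R :=
  sum_f_R0 (fun k => weight q K k * density t (site x0 K k)) (2 * K).

Definition weighted_mass_deriv (q : R) (K : nat) (x0 : Z) (t : R) : R :=
  sum_f_R0 (fun k => weight q K k *
    (2 * flux t (site x0 K k) - 2 * flux t (site x0 K k - 1))) (2 * K).

Lemma weighted_mass_nonneg q K x0 t : 0 < q -> 0 <= weighted_mass q K x0 t.
Proof.
  intros Hq. apply cond_pos_sum. intros k.
  apply Rmult_le_pos; [left; apply weight_pos, Hq | apply density_nonneg].
Qed.

Lemma is_derive_weighted_mass q K x0 t : is_lattice_NLS_solution psi ->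
  is_derive (weighted_mass q K x0) t (weighted_mass_deriv q K x0 t).
Proof.
  intros Hpsi.
  apply (is_derive_sum_f_R0 (fun k s => weight q K k * density s (site x0 K k))).
  intros k. apply is_derive_scal, is_derive_density, Hpsi.
Qed.

Lemma weight_sub_mul_flux_le q K x0 t k : 0 < q <= 1 ->
  (weight q K k - weight q K (S k)) * (2 * flux t (site x0 K k))
  <= (/ q - 1) * (weight q K k * density t (site x0 K k)
                  + weight q K (S k) * density t (site x0 K (S k))).
Proof.
  intros Hq. destruct (Rabs_weight_sub_succ q K k Hq) as [Hk HSk].
  pose proof (Rabs_flux_le t (site x0 K k)) as Hf. rewrite <- site_succ in Hf.
  eapply Rle_trans; [apply Rle_abs|]. rewrite !Rabs_mult, (Rabs_pos_eq 2) by lra.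
  pose proof (Rabs_pos (weight q K k - weight q K (S k))).
  pose proof (density_nonneg t (site x0 K k)). pose proof (density_nonneg t (site x0 K (S k))).
  nra.
Qed.

(* Summation by parts moves the difference onto the weights, which vary by a factor [q]
   between neighbours; only the two boundary fluxes of the truncated window remain. *)
Lemma weighted_mass_deriv_le q K x0 t B : 0 < q <= 1 -> (0 < K)%nat ->
  (forall x, density t x <= B) ->
  weighted_mass_deriv q K x0 t <= 2 * (/ q - 1) * weighted_mass q K x0 t + 4 * q ^ K * B.
Proof.
  intros Hq HK HB. unfold weighted_mass_deriv, weighted_mass.
  set (n := (2 * K - 1)%nat). replace (2 * K)%nat with (S n) by lia.
  rewrite (sum_f_R0_by_parts (weight q K) (fun k => 2 * flux t (site x0 K k))
    (fun k => 2 * flux t (site x0 K k - 1)))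
    by (intros k; rewrite site_succ; do 2 f_equal; ring).
  set (b k := weight q K k * density t (site x0 K k)).
  assert (Hb : forall k, 0 <= b k).
  { intros k. apply Rmult_le_pos; [left; apply weight_pos; lra | apply density_nonneg]. }
  assert (Hflux : forall x, Rabs (flux t x) <= B).
  { intros x. eapply Rle_trans; [apply Rabs_flux_le|].
    pose proof (HB x). pose proof (HB (x + 1)%Z). lra. }
  assert (Hinterior :
    sum_f_R0 (fun k => (weight q K k - weight q K (S k)) * (2 * flux t (site x0 K k))) n
    <= (/ q - 1) * sum_f_R0 (fun k => b k + b (S k)) n).
  { rewrite scal_sum. apply sum_growing. intros k.
    rewrite (Rmult_comm _ (/ q - 1)). apply weight_sub_mul_flux_le, Hq. }
  assert (Hpairs : sum_f_R0 (fun k => b k + b (S k)) n <= 2 * sum_f_R0 b (S n)).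
  { pose proof (sum_f_R0_monotone b n (S n) Hb ltac:(lia)).
    rewrite plus_sum. rewrite (decomp_sum b (S n)), Nat.pred_succ in * by lia.
    pose proof (Hb 0%nat). lra. }
  assert (Hends : weight q K 0 = q ^ K /\ weight q K (S n) = q ^ K)
    by (unfold weight, n; split; f_equal; lia).
  destruct Hends as [-> ->].
  pose proof (Hflux (site x0 K (S n))) as HfS. pose proof (Hflux (site x0 K 0 - 1)%Z) as Hf0.
  apply Rabs_le_between in HfS. apply Rabs_le_between in Hf0.
  pose proof (pow_lt q K ltac:(lra)).
  assert (1 <= / q) by (rewrite <- Rinv_1; apply Rinv_le_contravar; lra).
  fold b. nra.
Qed.

Lemma weighted_mass_le q K x0 t D : 0 < q < 1 -> (forall x, density t x <= D) ->
  weighted_mass q K x0 t <= 2 * D / (1 - q).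
Proof.
  intros Hq HD. pose proof (Rle_trans _ _ _ (density_nonneg t x0) (HD x0)) as HD0.
  apply Rle_trans with (sum_f_R0 (fun k => weight q K k * D) (2 * K)).
  - apply sum_growing. intros k.
    apply Rmult_le_compat_l; [left; apply weight_pos; lra | apply HD].
  - rewrite <- scal_sum. pose proof (sum_weight_le q K Hq).
    replace (2 * D / (1 - q)) with (D * (2 / (1 - q))) by (field; lra).
    apply Rmult_le_compat_l; assumption.
Qed.

Lemma window_mass_le_weighted_mass q N K x0 t : 0 < q <= 1 -> (N <= K)%nat ->
  q ^ N * sum_f_R0 (fun k => density t (site x0 N k)) (2 * N) <= weighted_mass q K x0 t.
Proof.
  intros Hq HNK. set (b j := weight q K j * density t (site x0 K j)).
  apply Rle_trans with (sum_f_R0 (fun k => b (k + (K - N))%nat) (2 * N)).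
  - rewrite scal_sum. apply sum_Rle. intros k Hk. unfold b.
    replace (site x0 N k) with (site x0 K (k + (K - N))) by (unfold site; lia).
    rewrite Rmult_comm. apply Rmult_le_compat_r; [apply density_nonneg|].
    apply pow_le_weight; [exact Hq | lia].
  - apply sum_f_R0_shift_le; [|lia]. intros j.
    apply Rmult_le_pos; [left; apply weight_pos; lra | apply density_nonneg].
Qed.

Lemma weighted_mass_growth q K x0 T B : is_lattice_NLS_solution psi ->
  0 < q < 1 -> (0 < K)%nat -> 0 <= T ->
  (forall t x, 0 <= t <= T -> density t x <= B) ->
  weighted_mass q K x0 T
  <= exp (2 * (/ q - 1) * T) * (weighted_mass q K x0 0 + 2 * q ^ K * B / (/ q - 1)).
Proof.
  intros Hpsi Hq HK HT HB.
  assert (Hc : 0 < / q - 1).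
  { assert (1 < / q) by (rewrite <- Rinv_1; apply Rinv_lt_contravar; lra). lra. }
  assert (HE : 0 <= 2 * q ^ K * B / (/ q - 1)).
  { pose proof (Rle_trans _ _ _ (density_nonneg 0 x0) (HB 0 x0 ltac:(lra))).
    pose proof (pow_lt q K ltac:(lra)).
    apply Rdiv_le_0_compat; [nra | exact Hc]. }
  replace (2 * q ^ K * B / (/ q - 1)) with (4 * q ^ K * B / (2 * (/ q - 1))) in *
    by (field; lra).
  pose proof (gronwall_linear (weighted_mass q K x0) (weighted_mass_deriv q K x0)
    (2 * (/ q - 1)) (4 * q ^ K * B) T ltac:(lra) HT
    (fun t => is_derive_weighted_mass q K x0 t Hpsi)
    (fun t Ht => weighted_mass_deriv_le q K x0 t B ltac:(lra) HK (fun x => HB t x Ht))).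
  lra.
Qed.

End Lattice_mass.

Lemma INR_Int_part_le t0 : 0 <= t0 -> INR (Z.to_nat (Int_part t0)) <= t0.
Proof.
  intros Ht0. destruct (base_Int_part t0) as [HN HN1].
  assert (HN0 : (-1 < Int_part t0)%Z) by (apply lt_IZR; lra).
  rewrite INR_IZR_INZ, Z2Nat.id by lia. exact HN.
Qed.

Lemma local_mass_eq psi t0 x0 : 0 <= t0 ->
  local_mass psi t0 x0
  = sum_f_R0 (fun k => density psi t0 (site x0 (Z.to_nat (Int_part t0)) k))
             (2 * Z.to_nat (Int_part t0)).
Proof.
  intros Ht0. destruct (base_Int_part t0) as [_ HN].
  assert (HN0 : (-1 < Int_part t0)%Z) by (apply lt_IZR; lra).
  unfold local_mass, density, site. rewrite Z2Nat.id by lia.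
  replace (Z.to_nat (2 * Int_part t0)) with (2 * Z.to_nat (Int_part t0))%nat by lia.
  reflexivity.
Qed.

Lemma density_le_local_mass psi t0 x0 : 0 <= t0 ->
  density psi t0 x0 <= local_mass psi t0 x0.
Proof.
  intros Ht0. rewrite local_mass_eq by exact Ht0.
  set (N := Z.to_nat (Int_part t0)).
  replace (density psi t0 x0) with (density psi t0 (site x0 N N))
    by (f_equal; unfold site; ring).
  apply (sum_f_R0_shift_le (fun k => density psi t0 (site x0 N k)) 0 N); [|lia].
  intros; apply density_nonneg.
Qed.

Lemma local_mass_le_truncated psi A B q x0 t0 K : is_lattice_NLS_solution psi ->
  (forall x, Cmod (psi 0 x) <= A) -> (forall t x, 0 <= t <= t0 -> density psi t x <= B) ->
  0 <= t0 -> 0 < q < 1 -> (/ q - 1) * t0 <= exp 1 -> / (1 - q) <= 2 * t0 ->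
  exp (- 1) <= q ^ Z.to_nat (Int_part t0) -> (Z.to_nat (Int_part t0) < K)%nat ->
  local_mass psi t0 x0 <= 4 * exp 1 * exp (2 * exp 1) * A ^ 2 * t0
                         + exp 1 * exp (2 * exp 1) * (2 * B / (/ q - 1)) * q ^ K.
Proof.
  intros Hpsi HA HB Ht0 Hq Hrate Hgeom HqN HK.
  rewrite local_mass_eq by exact Ht0.
  set (N := Z.to_nat (Int_part t0)) in *.
  set (L := sum_f_R0 (fun k => density psi t0 (site x0 N k)) (2 * N)).
  pose proof (window_mass_le_weighted_mass psi q N K x0 t0 ltac:(lra) ltac:(lia)) as Hwin.
  pose proof (weighted_mass_growth psi q K x0 t0 B Hpsi Hq ltac:(lia) Ht0 HB) as Hgrowth.
  pose proof (weighted_mass_le psi q K x0 0 (A ^ 2) Hq (fun x => density_le psi 0 x A (HA x)))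
    as Hmass0.
  pose proof (weighted_mass_nonneg psi q K x0 0 ltac:(lra)).
  assert (HL : 0 <= L) by (apply cond_pos_sum; intros; apply density_nonneg).
  assert (Hexp : exp (2 * (/ q - 1) * t0) <= exp (2 * exp 1)) by (apply exp_le_exp; lra).
  assert (Hinit : 2 * A ^ 2 / (1 - q) <= 4 * t0 * A ^ 2)
    by (pose proof (pow2_ge_0 A); unfold Rdiv; nra).
  assert (HE : 0 <= 2 * q ^ K * B / (/ q - 1)).
  { pose proof (pow_lt q K ltac:(lra)).
    pose proof (Rle_trans _ _ _ (density_nonneg psi t0 x0) (HB t0 x0 ltac:(lra))).
    assert (1 < / q) by (rewrite <- Rinv_1; apply Rinv_lt_contravar; lra).
    apply Rdiv_le_0_compat; nra. }
  assert (HeL : exp (- 1) * L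
                <= exp (2 * exp 1) * (4 * t0 * A ^ 2 + 2 * q ^ K * B / (/ q - 1))).
  { apply Rle_trans with (q ^ N * L); [apply Rmult_le_compat_r; assumption|].
    apply (Rle_trans _ _ _ Hwin), (Rle_trans _ _ _ Hgrowth).
    apply Rmult_le_compat; [apply Rlt_le, exp_pos | lra | exact Hexp | lra]. }
  assert (Hee : exp 1 * exp (- 1) = 1) by (rewrite <- exp_plus, Rplus_opp_r; apply exp_0).
  apply Rmult_le_compat_l with (r := exp 1) in HeL; [|apply Rlt_le, exp_pos].
  rewrite <- Rmult_assoc, Hee, Rmult_1_l in HeL.
  unfold Rdiv in *. lra.
Qed.

Lemma local_mass_le psi A x0 t0 : is_lattice_NLS_solution psi ->
  (forall x, Cmod (psi 0 x) <= A) -> 1 <= t0 ->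
  local_mass psi t0 x0 <= 4 * exp 1 * exp (2 * exp 1) * A ^ 2 * t0.
Proof.
  intros Hpsi HA Ht0.
  assert (Hs : 0 < / t0 <= 1).
  { split; [apply Rinv_0_lt_compat; lra|]. rewrite <- Rinv_1. apply Rinv_le_contravar; lra. }
  assert (Hst : / t0 * t0 = 1) by (field; lra).
  set (q := exp (- / t0)).
  assert (Hq : 0 < q < 1).
  { split; [apply exp_pos|]. rewrite <- exp_0. apply exp_increasing. lra. }
  assert (Hrate : (/ q - 1) * t0 <= exp 1).
  { unfold q. rewrite exp_Ropp, Rinv_inv.
    pose proof (exp_sub_1_le (/ t0) ltac:(lra)) as H.
    apply Rmult_le_compat_r with (r := t0) in H; [|lra].
    rewrite Rmult_assoc, Hst, Rmult_1_r in H. exact H. }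
  assert (Hgeom : / (1 - q) <= 2 * t0).
  { replace (2 * t0) with (2 / / t0) by (field; lra). apply inv_1_sub_exp_opp_le, Hs. }
  assert (HqN : exp (- 1) <= q ^ Z.to_nat (Int_part t0)).
  { apply exp_opp_pow_ge; [lra|].
    pose proof (INR_Int_part_le t0 ltac:(lra)).
    apply Rmult_le_compat_l with (r := / t0) in H; lra. }
  destruct (proj2 Hpsi t0) as [M HM].
  assert (HB : forall t x, 0 <= t <= t0 -> density psi t x <= M ^ 2).
  { intros t x Ht. apply density_le, HM. rewrite Rabs_pos_eq; lra. }
  apply (le_of_le_add_pow _ _ (exp 1 * exp (2 * exp 1) * (2 * M ^ 2 / (/ q - 1))) q
    (S (Z.to_nat (Int_part t0)))); [lra|].
  intros K HK.
  apply (local_mass_le_truncated psi A (M ^ 2)); auto; lra.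
Qed.

Theorem proposition2 :
  exists C0 : R,
    forall (A : R) (psi : R -> Z -> C),
      is_lattice_NLS_solution psi ->
      (forall x : Z, Cmod (psi 0 x) <= A) ->
      forall (x0 : Z) (t0 : R), 1 <= t0 ->
        Cmod (psi t0 x0) <= C0 * A * sqrt t0
        /\ / t0 * local_mass psi t0 x0 <= C0 * A ^ 2.
Proof.
  set (C0 := 4 * exp 1 * exp (2 * exp 1)).
  assert (HC0 : 1 <= C0).
  { pose proof (exp_ineq1_le 1). pose proof (exp_ineq1_le (2 * exp 1)). unfold C0. nra. }
  exists C0. intros A psi Hpsi HA x0 t0 Ht0.
  assert (HA0 : 0 <= A) by (pose proof (Cmod_ge_0 (psi 0 0%Z)); pose proof (HA 0%Z); lra).
  pose proof (local_mass_le psi A x0 t0 Hpsi HA Ht0) as Hmass. fold C0 in Hmass.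
  pose proof (density_le_local_mass psi t0 x0 ltac:(lra)) as Hx0.
  split.
  - pose proof (sqrt_pos t0).
    rewrite <- (sqrt_pow2 (Cmod _)) by apply Cmod_ge_0.
    rewrite <- (sqrt_pow2 (C0 * A * sqrt t0)) by (apply Rmult_le_pos; [nra | assumption]).
    apply sqrt_le_1_alt. unfold density in Hx0.
    replace ((C0 * A * sqrt t0) ^ 2) with ((C0 * A) ^ 2 * sqrt t0 ^ 2) by ring.
    rewrite pow2_sqrt by lra.
    assert (0 <= A ^ 2 * t0) by (pose proof (pow2_ge_0 A); nra). nra.
  - apply Rmult_le_reg_l with t0; [lra|].
    rewrite <- Rmult_assoc, Rinv_r, Rmult_1_l by lra. lra.
Qed.
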